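(* For any ordinal $\zeta$ of uncountable cofinality, there exists a class map $\psi_\zeta:\mathrm{Ord}\rightarrow\mathrm{cf}(\zeta)$ satisfying the following. For every ordinal $\alpha$ with $\mathrm{cf}(\alpha)=\mathrm{cf}(\zeta)$, every function $f:\alpha\rightarrow\mathrm{Ord}$ and every stationary $s\subseteq\alpha$ such that $f\restriction s$ is strictly increasing and converging to $\zeta$, there exists a club $c\subseteq\alpha$ such that $(\psi_\zeta\circ f)\restriction(c\cap s)$ is strictly increasing. *)

(* Ordinals are modelled as elements of an arbitrary
   well-ordered type (W, lt), i.e. an initial segment of Ord large enough
   to contain all ordinals under consideration. *)
From Stdlib Require Import Relations Wellfounded.

Section Ords.
Variable W : Type.
Variable lt : W -> W -> Prop.

Definition is_wellorder : Prop :=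
  well_founded lt /\
  (forall x y z, lt x y -> lt y z -> lt x z) /\
  (forall x, ~ lt x x) /\
  (forall x y, lt x y \/ x = y \/ lt y x).

Definition le (x y : W) : Prop := lt x y \/ x = y.

Definition cofinal_map_exists (delta zeta : W) : Prop :=
  exists g : W -> W,
    (forall i, lt i delta -> lt (g i) zeta) /\
    (forall x, lt x zeta -> exists i, lt i delta /\ le x (g i)).

Definition is_cf (zeta delta : W) : Prop :=
  cofinal_map_exists delta zeta /\
  (forall d, lt d delta -> ~ cofinal_map_exists d zeta).

Definition uncountable_cof (zeta : W) : Prop :=
  (exists x, lt x zeta) /\
  ~ (exists g : nat -> W,
        (forall n, lt (g n) zeta) /\
        (forall x, lt x zeta -> exists n, le x (g n))).

Definition unbounded_in (alpha : W) (c : W -> Prop) : Prop :=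
  forall x, lt x alpha -> exists y, c y /\ le x y /\ lt y alpha.

Definition closed_in (alpha : W) (c : W -> Prop) : Prop :=
  forall gamma, lt gamma alpha ->
    (exists x, lt x gamma) ->
    (forall x, lt x gamma -> exists y, c y /\ lt x y /\ lt y gamma) ->
    c gamma.

Definition club (alpha : W) (c : W -> Prop) : Prop :=
  (forall x, c x -> lt x alpha) /\ unbounded_in alpha c /\ closed_in alpha c.

Definition stationary (alpha : W) (s : W -> Prop) : Prop :=
  (forall x, s x -> lt x alpha) /\
  (forall c, club alpha c -> exists x, c x /\ s x).

Definition strictly_increasing_on (s : W -> Prop) (f : W -> W) : Prop :=
  forall x y, s x -> s y -> lt x y -> lt (f x) (f y).

Definition converges_to_on (s : W -> Prop) (f : W -> W) (zeta : W) : Prop :=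
  (forall x, s x -> le (f x) zeta) /\
  (forall y, lt y zeta -> exists x, s x /\ lt y (f x)).

End Ords.

From Stdlib Require Import Classical ClassicalEpsilon ChoiceFacts.

(* Let [g : delta -> zeta] be cofinal and let [psi b] be the least [i] with
   [b <= g i].  Then [psi] is monotone below [zeta], and it has no largest
   value there: a largest value [i < delta] would yield a cofinal map with
   domain [i], or make [zeta] a successor.  Given [f] increasing along [s]
   with supremum [zeta], the points [gamma] below which [psi o f] takes no
   largest value on [s] form a closed set on which [psi o f] is strictly
   increasing.  It is unbounded: iterating "go up in [s] until [psi o f]
   increases" omega times stays below some point of [alpha] (otherwise
   [zeta] would have countable cofinality), and the supremum of the
   iterates is such a [gamma]. *)

Lemma dependent_choice_on (A : Type) (P : A -> Prop) (R : A -> A -> Prop) :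
  (forall z, P z -> exists z', P z' /\ R z z') ->
  forall z0, P z0 ->
  exists zs : nat -> A, zs 0 = z0 /\ forall n, P (zs n) /\ R (zs n) (zs (S n)).
Proof.
  intros Hstep z0 Hz0.
  destruct (functional_choice_imp_functional_dependent_choice choice
              (fun z z' => P z -> P z' /\ R z z')) with (x0 := z0)
    as [zs [Hzs0 Hzs]].
  - intros z. destruct (classic (P z)) as [Hz|Hz].
    + destruct (Hstep z Hz) as [z' Hz']. now exists z'.
    + exists z. now intros.
  - assert (HP : forall n, P (zs n)).
    { induction n as [|n IH]; [now rewrite Hzs0 | apply (Hzs n IH)]. }
    exists zs. split; [exact Hzs0|]. intros n. split; [apply HP | apply (Hzs n (HP n))].
Qed.

Section WellOrder.

Variables (W : Type) (lt : W -> W -> Prop).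

Local Infix "≺" := lt (at level 70).
Local Infix "≼" := (le W lt) (at level 70).

Hypothesis lt_wf : well_founded lt.
Hypothesis lt_trans : forall x y z, x ≺ y -> y ≺ z -> x ≺ z.
Hypothesis lt_irrefl : forall x, ~ x ≺ x.
Hypothesis lt_trichotomy : forall x y, x ≺ y \/ x = y \/ y ≺ x.

Lemma le_refl x : x ≼ x.
Proof. now right. Qed.

Lemma le_lt_trans x y z : x ≼ y -> y ≺ z -> x ≺ z.
Proof. intros [Hxy| <-] Hyz; eauto. Qed.

Lemma lt_le_trans x y z : x ≺ y -> y ≼ z -> x ≺ z.
Proof. intros Hxy [Hyz| <-]; eauto. Qed.

Lemma le_trans x y z : x ≼ y -> y ≼ z -> x ≼ z.
Proof. intros [Hxy| <-] Hyz; [left; eapply lt_le_trans|]; eauto. Qed.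

Lemma lt_not_le x y : x ≺ y -> ~ y ≼ x.
Proof. intros Hxy Hyx. apply (lt_irrefl x). eapply lt_le_trans; eauto. Qed.

Lemma not_lt_le x y : ~ x ≺ y -> y ≼ x.
Proof. intros H. destruct (lt_trichotomy x y) as [|[<-|]]; [contradiction|right|left]; auto. Qed.

Lemma not_le_lt x y : ~ x ≼ y -> y ≺ x.
Proof. intros H. apply NNPP. intros H'. apply H, not_lt_le, H'. Qed.

Lemma exists_least (P : W -> Prop) :
  (exists x, P x) -> exists m, P m /\ forall y, y ≺ m -> ~ P y.
Proof.
  intros [x Hx]. induction x as [x IH] using (well_founded_ind lt_wf).
  destruct (classic (exists y, y ≺ x /\ P y)) as [[y [Hyx Hy]]|Hnone].
  - exact (IH y Hyx Hy).
  - exists x. split; [exact Hx|]. intros y Hyx Hy. eauto.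
Qed.

Definition max_of (x y : W) : W :=
  if excluded_middle_informative (x ≺ y) then y else x.

Lemma le_max_of_l x y : x ≼ max_of x y.
Proof. unfold max_of. destruct excluded_middle_informative; [left|right]; auto. Qed.

Lemma le_max_of_r x y : y ≼ max_of x y.
Proof. unfold max_of. destruct excluded_middle_informative; [right|apply not_lt_le]; auto. Qed.

Lemma max_of_lt x y z : x ≺ z -> y ≺ z -> max_of x y ≺ z.
Proof. unfold max_of. now destruct excluded_middle_informative. Qed.

Lemma tail_club alpha y :
  y ≺ alpha -> club W lt alpha (fun w => y ≼ w /\ w ≺ alpha).
Proof.
  intros Hy. split; [|split].
  - now intros x [_ Hx].
  - intros x Hx. destruct (classic (x ≺ y)) as [Hxy|Hxy].
    + exists y. repeat split; auto using le_refl. now left.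
    + exists x. repeat split; auto using le_refl, not_lt_le.
  - intros gamma Hgamma [x Hx] Hcof. destruct (Hcof x Hx) as [w [[Hyw _] [_ Hw]]].
    split; [left; eapply le_lt_trans|]; eauto.
Qed.

Lemma stationary_unbounded alpha s : stationary W lt alpha s -> unbounded_in W lt alpha s.
Proof.
  intros [_ Hst] x Hx. destruct (Hst _ (tail_club alpha x Hx)) as [y [[Hxy Hy] Hys]].
  now exists y.
Qed.

Lemma sequence_sup (zs : nat -> W) b :
  (forall n, zs n ≺ b) ->
  exists gamma, (forall n, zs n ≺ gamma) /\ gamma ≼ b /\
    forall x, x ≺ gamma -> exists n, x ≼ zs n.
Proof.
  intros Hb.
  destruct (exists_least (fun w => forall n, zs n ≺ w)) as [gamma [Hgamma Hleast]].
  { now exists b. }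
  exists gamma. split; [exact Hgamma|]. split.
  - apply not_lt_le. intros Hbg. exact (Hleast b Hbg Hb).
  - intros x Hx. apply NNPP. intros Hnone. apply (Hleast x Hx).
    intros n. apply not_le_lt. intros Hxn. apply Hnone. now exists n.
Qed.

Lemma uncountable_cof_no_max zeta a :
  uncountable_cof W lt zeta -> a ≺ zeta -> exists b, b ≺ zeta /\ a ≺ b.
Proof.
  intros [_ Hnc] Ha. apply NNPP. intros Hmax. apply Hnc.
  exists (fun _ => a). split; [auto|]. intros x Hx. exists 0.
  apply not_lt_le. intros Hax. apply Hmax. now exists x.
Qed.

Definition monotone_below (zeta : W) (psi : W -> W) : Prop :=
  forall b b', b ≼ b' -> b' ≺ zeta -> psi b ≼ psi b'.

Definition unbounded_below (zeta : W) (psi : W -> W) : Prop :=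
  forall b, b ≺ zeta -> exists b', b' ≺ zeta /\ psi b ≺ psi b'.

Section CofinalIndex.

Variables (zeta delta : W) (g : W -> W).
Hypothesis g_lt : forall i, i ≺ delta -> g i ≺ zeta.
Hypothesis g_cofinal : forall x, x ≺ zeta -> exists i, i ≺ delta /\ x ≼ g i.
Hypothesis delta_least : forall d, d ≺ delta -> ~ cofinal_map_exists W lt d zeta.
Hypothesis zeta_unc : uncountable_cof W lt zeta.

(* Above [zeta] the value is an arbitrary junk index below [delta]. *)
Definition is_cof_index (b i : W) : Prop :=
  i ≺ delta /\ (b ≺ zeta -> b ≼ g i /\ forall j, j ≺ i -> ~ b ≼ g j).

Lemma cof_index_exists b : exists i, is_cof_index b i.
Proof.
  destruct (classic (b ≺ zeta)) as [Hb|Hb].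
  - destruct (exists_least (fun i => i ≺ delta /\ b ≼ g i)) as [i [[Hi Hbi] Hleast]].
    { now apply g_cofinal. }
    exists i. split; [exact Hi|]. intros _. split; [exact Hbi|].
    intros j Hj Hbj. apply (Hleast j Hj). split; [eapply lt_trans|]; eauto.
  - destruct zeta_unc as [[x Hx] _]. destruct (g_cofinal x Hx) as [i [Hi _]].
    exists i. now split.
Qed.

Section CofIndexMap.

Variable psi : W -> W.
Hypothesis psi_spec : forall b, is_cof_index b (psi b).

Lemma cof_index_lt b : psi b ≺ delta.
Proof. apply psi_spec. Qed.

Lemma cof_index_monotone : monotone_below zeta psi.
Proof.
  intros b b' Hbb' Hb'. destruct (psi_spec b') as [_ Hpsi']. destruct (psi_spec b) as [_ Hpsi].
  destruct (Hpsi (le_lt_trans _ _ _ Hbb' Hb')) as [_ Hleast].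
  destruct (Hpsi' Hb') as [Hcov _].
  apply not_lt_le. intros Hlt. apply (Hleast _ Hlt). eapply le_trans; eauto.
Qed.

(* [max_of (g j) (g i)] keeps the cover [x <= g i] available from every [j < i]. *)
Lemma cofinal_map_below i j0 :
  j0 ≺ i -> i ≺ delta ->
  (forall x, x ≺ zeta -> exists j, j ≼ i /\ x ≼ g j) ->
  cofinal_map_exists W lt i zeta.
Proof.
  intros Hj0 Hi Hcov. exists (fun j => max_of (g j) (g i)). split.
  - intros j Hj. apply max_of_lt; apply g_lt; eauto.
  - intros x Hx. destruct (Hcov x Hx) as [j [[Hji| <-] Hxj]].
    + exists j. split; [exact Hji|]. eapply le_trans; [exact Hxj | apply le_max_of_l].
    + exists j0. split; [exact Hj0|]. eapply le_trans; [exact Hxj | apply le_max_of_r].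
Qed.

Lemma cof_index_unbounded : unbounded_below zeta psi.
Proof.
  intros b Hb. apply NNPP. intros Hmax.
  assert (Hcov : forall x, x ≺ zeta -> exists j, j ≼ psi b /\ x ≼ g j).
  { intros x Hx. exists (psi x). split.
    - apply not_lt_le. intros Hlt. apply Hmax. now exists x.
    - now apply psi_spec. }
  destruct (classic (exists j0, j0 ≺ psi b)) as [[j0 Hj0]|Hbottom].
  - apply (delta_least (psi b)); [apply cof_index_lt|].
    apply (cofinal_map_below _ j0); auto using cof_index_lt.
  - destruct (uncountable_cof_no_max zeta (g (psi b)) zeta_unc) as [x [Hx Hgx]].
    { apply g_lt, cof_index_lt. }
    destruct (Hcov x Hx) as [j [[Hj|Hj] Hxj]].
    + apply Hbottom. now exists j.
    + subst j. exact (lt_not_le _ _ Hgx Hxj).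
Qed.

End CofIndexMap.

Lemma cof_index_map_exists :
  exists psi : W -> W, (forall b, psi b ≺ delta) /\
    monotone_below zeta psi /\ unbounded_below zeta psi.
Proof.
  destruct (choice is_cof_index cof_index_exists) as [psi Hpsi].
  exists psi. split; [apply Hpsi|].
  split; [apply cof_index_monotone | apply cof_index_unbounded]; exact Hpsi.
Qed.

End CofinalIndex.

Section NoMaxPoints.

Variables (alpha : W) (s : W -> Prop) (h : W -> W).

Definition no_max_before (gamma : W) : Prop :=
  gamma ≺ alpha /\
  forall x, s x -> x ≺ gamma -> exists z, s z /\ z ≺ gamma /\ h x ≺ h z.

Hypothesis h_monotone : forall x y, s x -> s y -> x ≺ y -> h x ≼ h y.

Lemma no_max_before_closed : closed_in W lt alpha no_max_before.
Proof.
  intros gamma Hgamma _ Hcof. split; [exact Hgamma|]. intros x Hx Hxg.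
  destruct (Hcof x Hxg) as [y [[_ Hy] [Hxy Hyg]]].
  destruct (Hy x Hx Hxy) as [z [Hz [Hzy Hhz]]]. exists z. eauto.
Qed.

Lemma no_max_before_increasing :
  strictly_increasing_on W lt (fun x => no_max_before x /\ s x) h.
Proof.
  intros x y [_ Hx] [[_ Hy] Hys] Hxy.
  destruct (Hy x Hx Hxy) as [z [Hz [Hzy Hhz]]].
  eapply lt_le_trans; [exact Hhz|]. now apply h_monotone.
Qed.

Lemma no_max_before_unbounded :
  unbounded_in W lt alpha s ->
  (forall z, s z -> exists z', s z' /\ z ≺ z' /\ h z ≺ h z') ->
  (forall zs : nat -> W, (forall n, s (zs n)) -> exists b, b ≺ alpha /\ forall n, zs n ≺ b) ->
  unbounded_in W lt alpha no_max_before.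
Proof.
  intros Hs Hstep Hbounded x Hx.
  destruct (Hs x Hx) as [y0 [Hy0 [Hxy0 _]]].
  destruct (dependent_choice_on W s (fun z z' => z ≺ z' /\ h z ≺ h z') Hstep y0 Hy0)
    as [zs [Hzs0 Hzs]].
  destruct (Hbounded zs (fun n => proj1 (Hzs n))) as [b [Hb Hzsb]].
  destruct (sequence_sup zs b Hzsb) as [gamma [Hgamma [Hgb Hsup]]].
  exists gamma. split; [split|split].
  - eapply le_lt_trans; eauto.
  - intros x' Hx' Hx'g. destruct (Hsup x' Hx'g) as [n Hn].
    destruct (Hzs n) as [Hzn [_ Hhn]]. exists (zs (S n)).
    split; [apply Hzs|]. split; [apply Hgamma|].
    eapply le_lt_trans; [|exact Hhn].
    destruct Hn as [Hn| ->]; [now apply h_monotone | apply le_refl].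
  - left. eapply le_lt_trans; [exact Hxy0|]. rewrite <- Hzs0. apply Hgamma.
  - eapply le_lt_trans; eauto.
Qed.

End NoMaxPoints.

Section Composite.

Variables (zeta alpha : W) (psi f : W -> W) (s : W -> Prop).
Hypothesis zeta_unc : uncountable_cof W lt zeta.
Hypothesis psi_monotone : monotone_below zeta psi.
Hypothesis psi_unbounded : unbounded_below zeta psi.
Hypothesis s_below : forall x, s x -> x ≺ alpha.
Hypothesis f_increasing : strictly_increasing_on W lt s f.
Hypothesis f_converges : converges_to_on W lt s f zeta.

Lemma no_point_above_top y x : s y -> f y = zeta -> s x -> ~ y ≺ x.
Proof.
  intros Hy Hfy Hx Hyx. apply (lt_not_le (f y) (f x)); [now apply f_increasing|].
  rewrite Hfy. now apply f_converges.
Qed.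

Section BelowTop.

Hypothesis f_lt : forall x, s x -> f x ≺ zeta.

Lemma composite_monotone x y : s x -> s y -> x ≺ y -> psi (f x) ≼ psi (f y).
Proof. intros Hx Hy Hxy. apply psi_monotone; [left; now apply f_increasing | now apply f_lt]. Qed.

Lemma composite_step z :
  s z -> exists z', s z' /\ z ≺ z' /\ psi (f z) ≺ psi (f z').
Proof.
  intros Hz. destruct (psi_unbounded (f z) (f_lt z Hz)) as [b [Hb Hfzb]].
  destruct (proj2 f_converges b Hb) as [x [Hx Hbx]].
  assert (Hzx : psi (f z) ≺ psi (f x)).
  { eapply lt_le_trans; [exact Hfzb|]. apply psi_monotone; [now left | now apply f_lt]. }
  exists x. split; [exact Hx|]. split; [|exact Hzx].
  apply not_le_lt. intros Hxz. apply (lt_not_le _ _ Hzx).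
  destruct Hxz as [Hxz| ->]; [now apply composite_monotone | apply le_refl].
Qed.

(* A sequence in [s] cofinal in [alpha] would make [f] of it cofinal in [zeta]. *)
Lemma sequences_bounded (zs : nat -> W) :
  (forall n, s (zs n)) -> exists b, b ≺ alpha /\ forall n, zs n ≺ b.
Proof.
  intros Hzs. apply NNPP. intros Hunb. apply (proj2 zeta_unc).
  exists (fun n => f (zs n)). split; [intros n; now apply f_lt|].
  intros y Hy. destruct (proj2 f_converges y Hy) as [x [Hx Hyx]].
  assert (Hxn : exists n, x ≼ zs n).
  { apply NNPP. intros Hnone. apply Hunb. exists x. split; [now apply s_below|].
    intros n. apply not_le_lt. intros Hxn. apply Hnone. now exists n. }
  destruct Hxn as [n Hxn]. exists n. left. eapply lt_le_trans; [exact Hyx|].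
  destruct Hxn as [Hxn| ->]; [left; now apply f_increasing | apply le_refl].
Qed.

End BelowTop.

Lemma composite_club :
  unbounded_in W lt alpha s ->
  exists c, club W lt alpha c /\
    strictly_increasing_on W lt (fun x => c x /\ s x) (fun x => psi (f x)).
Proof.
  intros Hs. destruct (classic (exists y, s y /\ f y = zeta)) as [[y [Hy Hfy]]|Htop].
  - exists (fun w => y ≼ w /\ w ≺ alpha). split; [now apply tail_club, s_below|].
    intros x x' [[Hyx _] _] [_ Hx'] Hxx'. exfalso.
    apply (no_point_above_top y x' Hy Hfy Hx'). eapply le_lt_trans; eauto.
  - assert (Hflt : forall x, s x -> f x ≺ zeta).
    { intros x Hx. destruct (proj1 f_converges x Hx) as [|Hfx]; [assumption|].
      exfalso. apply Htop. now exists x. }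
    exists (no_max_before alpha s (fun x => psi (f x))). split; [split; [|split]|].
    + now intros x [Hx _].
    + apply no_max_before_unbounded; auto using composite_monotone, composite_step,
        sequences_bounded.
    + apply no_max_before_closed.
    + apply no_max_before_increasing. auto using composite_monotone.
Qed.

End Composite.

End WellOrder.

Theorem lemma3p4 (W : Type) (lt : W -> W -> Prop) (Hwo : is_wellorder W lt)
  (zeta delta : W) (Hcf : is_cf W lt zeta delta)
  (Hunc : uncountable_cof W lt zeta) :
  exists psi : W -> W,
    (forall x, lt (psi x) delta) /\
    (forall (alpha : W), is_cf W lt alpha delta ->
     forall (f : W -> W) (s : W -> Prop),
       stationary W lt alpha s ->
       strictly_increasing_on W lt s f ->
       converges_to_on W lt s f zeta ->
       exists c, club W lt alpha c /\
         strictly_increasing_on W lt (fun x => c x /\ s x) (fun x => psi (f x))).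
Proof.
  destruct Hwo as (Hwf & Htrans & Hirrefl & Htri).
  destruct Hcf as [[g [Hg_lt Hg_cofinal]] Hleast].
  destruct (cof_index_map_exists W lt Hwf Htrans Hirrefl Htri zeta delta g
              Hg_lt Hg_cofinal Hleast Hunc) as [psi [Hpsi_lt [Hmono Hunb]]].
  exists psi. split; [exact Hpsi_lt|].
  intros alpha _ f s Hstat Hinc Hconv.
  apply (composite_club W lt Hwf Htrans Hirrefl Htri zeta alpha psi f s); auto.
  - apply Hstat.
  - apply (stationary_unbounded W lt Htrans Htri), Hstat.
Qed.
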